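(* Let $(\{\mathcal{I}_i\}_{i=1}^k,Q,W)$ be a weighted stochastic block model on $[n]$ ($n>k$) with $B=Q\odot W$, and suppose there are $\rho\ge1$ and $\Delta>0$ with $\max_i|\mathcal{I}_i|/\min_i|\mathcal{I}_i|\le\rho$ and $\min_iB_{ii}-2\rho\max_i\sum_{j\ne i}B_{ij}\ge\Delta$. Let $A_{\mathrm{blk}}=P_{\{\mathcal{I}_i\}}BP_{\{\mathcal{I}_i\}}^T$ and $L_{\mathrm{blk}}=\mathrm{diag}\{A_{\mathrm{blk}}\mathbf{1}_n\}-A_{\mathrm{blk}}$. Let $n_{\min}=\min_i|\mathcal{I}_i|$ and $b_{\min}=\min_i[B\mathbf{1}_k]_i$. Then: (1) $L_{\mathrm{blk}}$ is $k$-block-ideal (with respect to $\{\mathcal{I}_i\}_{i=1}^k$); (2) $\lambda_{k+1}(L_{\mathrm{blk}})\ge b_{\min}n_{\min}$; (3) $\lambda_{k+1}(L_{\mathrm{blk}})-\lambda_k(L_{\mathrm{blk}})\ge\Delta n_{\min}$.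
   Context: Weighted stochastic block model $(\{\mathcal{I}_i\}_{i=1}^k,Q,W)$: $\{\mathcal{I}_i\}$ a $k$-way partition of $[n]$, $Q\in[0,1]^{k\times k}$ and $W\in\mathbb{R}_{\ge0}^{k\times k}$ symmetric; adjacency entries $A_{ij}=A_{ji}$ equal $W_{(i),(j)}$ with probability $Q_{(i),(j)}$ and $0$ otherwise, independently for $i\ge j$, where $(j)=i$ iff $j\in\mathcal{I}_i$. Thus $A_{\mathrm{blk}}$ is the expected adjacency matrix (as printed). $\odot$ is the Hadamard product; $P_{\{\mathcal{I}_i\}}=[\mathbf{1}_{\mathcal{I}_1}\ \cdots\ \mathbf{1}_{\mathcal{I}_k}]$ with $\mathbf{1}_\mathcal{I}$ the indicator vector of $\mathcal{I}$. $\lambda_i(\cdot)$ denotes the $i$-th smallest eigenvalue. A Laplacian $L$ is $k$-block-ideal with respect to $\{\mathcal{I}_i\}$ if there is an invertible $S\in\mathbb{R}^{k\times k}$ with $[v_1(L)\ \cdots\ v_k(L)]=P_{\{\mathcal{I}_i\}}S$, where $v_1(L),\dots,v_k(L)$ are orthonormal eigenvectors for the $k$ smallest eigenvalues of $L$. *)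

From HB Require Import structures.
From mathcomp Require Import all_boot all_order all_algebra.
From mathcomp Require Import reals.
Set Implicit Arguments. Unset Strict Implicit. Unset Printing Implicit Defensive.
Import Order.TTheory GRing.Theory Num.Theory.
Local Open Scope ring_scope.

Section Defs.
Variable R : realType.

Definition seqmin (s : seq R) : R := foldr Num.min (head 0 s) s.
Definition seqmax (s : seq R) : R := foldr Num.max (head 0 s) s.

Definition ordmin (k : nat) (f : 'I_k -> R) : R := seqmin [seq f i | i <- enum 'I_k].
Definition ordmax (k : nat) (f : 'I_k -> R) : R := seqmax [seq f i | i <- enum 'I_k].

(* A k-way partition {I_i} of [n] is given by the labelling lab : j |-> (j),
   with I_i = [set j | lab j == i]. *)
Definition block (n k : nat) (lab : 'I_n -> 'I_k) (i : 'I_k) : {set 'I_n} :=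
  [set j | lab j == i].

Definition partmx (n k : nat) (lab : 'I_n -> 'I_k) : 'M[R]_(n, k) :=
  \matrix_(j, i) (lab j == i)%:R.

Definition laplacian (n : nat) (A : 'M[R]_n) : 'M[R]_n :=
  diag_mx (\row_i \sum_j A i j) - A.

(* s is the list of eigenvalues of A (with multiplicity), sorted increasingly;
   so lambda_i(A) = s`_(i-1). *)
Definition sorted_spectrum (n : nat) (A : 'M[R]_n) (s : seq R) : Prop :=
  sorted <=%R s /\ char_poly A = \prod_(x <- s) ('X - x%:P).

Definition k_block_ideal (n k : nat) (L : 'M[R]_n) (lab : 'I_n -> 'I_k) : Prop :=
  forall s, sorted_spectrum L s ->
  exists V : 'M[R]_(n, k),
    [/\ V^T *m V = 1%:M,
        forall j : 'I_k, L *m col j V = s`_j *: col j V &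
        exists2 S : 'M[R]_k, S \in unitmx & V = partmx lab *m S].

End Defs.

From HB Require Import structures.
From mathcomp Require Import all_boot all_order all_algebra.
From mathcomp Require Import reals.
From mathcomp Require Import ring lra zify.
Set Implicit Arguments. Unset Strict Implicit. Unset Printing Implicit Defensive.
Import Order.TTheory GRing.Theory Num.Theory.
Local Open Scope ring_scope.

(* The Laplacian L of P B P^T maps the vector of block sums P^T x through the
   k x k quotient matrix C = diag(deg) - diag(|I|) B, where
   deg_i = sum_l B_il |I_l| is the degree of every vertex of block i.  Hence an
   eigenvector of L whose eigenvalue is below every deg_i is constant on blocks,
   while, by Gershgorin's theorem for C, an eigenvector whose eigenvalue exceeds
   t = 2 rho n_min max_i sum_(j != i) B_ij has zero block sums.  The hypothesis
   on Delta gives t + Delta n_min <= deg_i.  In an orthonormal eigenbasis the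
   block-constant vectors span at most k dimensions and the vectors with zero
   block sums at most n - k, so lambda_k <= t < lambda_(k+1); the eigenvector
   of lambda_(k+1) has zero block sums, which forces lambda_(k+1) = deg_i for
   some i, and the k lowest eigenvectors are block-constant, i.e. of the form
   P S.  With 0-based indexing, lambda_(k+1) is s`_k. *)

Section RealDomainMatrix.
Variable R : realDomainType.

Lemma tr_mulmx_self_ge0 m (x : 'cV[R]_m) : 0 <= (x^T *m x) 0 0.
Proof. by rewrite mxE; apply: sumr_ge0 => i _; rewrite !mxE -expr2 sqr_ge0. Qed.

Lemma tr_mulmx_self_eq0 m (x : 'cV[R]_m) : ((x^T *m x) 0 0 == 0) = (x == 0).
Proof.
rewrite mxE psumr_eq0 => [|i _]; last by rewrite !mxE -expr2 sqr_ge0.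
apply/allP/eqP => [x0|-> i _]; last by rewrite !mxE mul0r eqxx.
apply/matrixP => i j; rewrite ord1 mxE; apply/eqP.
by have := x0 i (mem_index_enum _); rewrite !mxE mulf_eq0 orbb.
Qed.

Lemma colsub_orthonormal m p q (f : 'I_q -> 'I_p) (U : 'M[R]_(m, p)) :
  injective f -> U^T *m U = 1%:M -> (colsub f U)^T *m colsub f U = 1%:M.
Proof.
move=> f_inj UU; rewrite trmx_mxsub mul_rowsub_mx mulmx_colsub UU.
by apply/matrixP => i j; rewrite !mxE (inj_eq f_inj).
Qed.

End RealDomainMatrix.

Section RealFieldMatrix.
Variable R : realFieldType.

Lemma orthonormal_rank m p (Y : 'M[R]_(m, p)) : Y^T *m Y = 1%:M -> \rank Y = p.
Proof.
move=> YY; apply/eqP; rewrite eqn_leq rank_leq_col /=.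
by rewrite -{1}(mxrank1 R p) -YY mxrankM_maxr.
Qed.

Lemma householder m (e w : 'cV[R]_m) : e^T *m e = 1%:M -> w^T *m w = 1%:M ->
  exists H : 'M[R]_m, [/\ H^T = H, H *m H = 1%:M & H *m e = w].
Proof.
move=> ee ww; have [->|w_neq_e] := eqVneq w e.
  by exists 1%:M; rewrite trmx1 mulmx1 mul1mx.
set z := w - e; set q := (z^T *m z) 0 0; set d := (e^T *m w) 0 0.
have zz : z^T *m z = q%:M by exact: mx11_scalar.
have ew : e^T *m w = d%:M by exact: mx11_scalar.
have we : w^T *m e = d%:M by rewrite -[w^T *m e]trmxK trmx_mul trmxK ew tr_scalar_mx.
have qE : q = 2 - 2 * d.
  rewrite /q /z (linearB trmx) /= mulmxBl !mulmxBr ee ww ew we !mxE eqxx !mulr1n; ring.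
have ze : z^T *m e = (d - 1)%:M.
  by rewrite /z (linearB trmx) /= mulmxBl ee we raddfB.
have q_neq0 : q != 0 by rewrite /q tr_mulmx_self_eq0 subr_eq0.
exists (1%:M - (2 / q) *: (z *m z^T)); split.
- by rewrite linearB /= linearZ /= trmx1 trmx_mul trmxK.
- have zzT_sqr : z *m z^T *m (z *m z^T) = q *: (z *m z^T).
    by rewrite mulmxA -(mulmxA z) zz mul_mx_scalar scalemxAl.
  rewrite mulmxBl mul1mx mulmxBr mulmx1 -scalemxAl -scalemxAr zzT_sqr !scalerA.
  have -> : 2 / q * (2 / q) * q = 2 / q + 2 / q by field.
  by rewrite scalerDl opprB addrK subrK.
- rewrite mulmxBl mul1mx -scalemxAl -mulmxA ze mul_mx_scalar scalerA.
  have -> : 2 / q * (d - 1) = -1 by move: q_neq0; rewrite qE => ?; field.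
  by rewrite scaleN1r opprK addrC subrK.
Qed.

End RealFieldMatrix.

Lemma widen_ord_inj m p (le_mp : (m <= p)%N) : injective (widen_ord le_mp).
Proof. by move=> c c' e; apply: val_inj; exact: (congr1 val e). Qed.

Lemma col_mul_diag_mx (R : comPzRingType) m p (A : 'M[R]_(m, p)) (d : 'rV[R]_p) j :
  col j (A *m diag_mx d) = d 0 j *: col j A.
Proof. by apply/matrixP => a b; rewrite mul_mx_diag !mxE mulrC. Qed.

Lemma orthonormal_col_neq0 (R : nzRingType) m p (U : 'M[R]_(m, p)) j :
  U^T *m U = 1%:M -> col j U != 0.
Proof.
move=> UU; apply/eqP => Uj0; have := congr1 (fun M : 'M_p => M j j) UU.
rewrite !mxE eqxx big1 => [/eqP|l _]; first by rewrite eq_sym oner_eq0.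
by have := congr1 (fun M : 'cV_m => M l 0) Uj0; rewrite !mxE => ->; rewrite mulr0.
Qed.

Lemma char_poly_conj (R : comNzRingType) m (P Q A : 'M[R]_m) :
  P *m Q = 1%:M -> char_poly (P *m A *m Q) = char_poly A.
Proof.
move=> PQ; pose Pp := map_mx polyC P; pose Qp := map_mx polyC Q.
have PQp : Pp *m Qp = 1%:M by rewrite -map_mxM PQ map_mx1.
have charE : char_poly_mx (P *m A *m Q) = Pp *m char_poly_mx A *m Qp.
  rewrite /char_poly_mx mulmxBr mulmxBl mul_mx_scalar -scalemxAl PQp scalemx1.
  by rewrite -!map_mxM.
by rewrite /char_poly charE !det_mulmx mulrAC -det_mulmx PQp det1 mul1r.
Qed.

Lemma block_mx_of_eigen_e0 (R : pzRingType) m (M : 'M[R]_(1 + m)) x :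
  M^T = M -> M *m col_mx 1%:M 0 = x *: col_mx 1%:M 0 ->
  M = block_mx x%:M 0 0 (drsubmx M).
Proof.
move=> symM; rewrite -{1}[M]submxK mul_block_col !mulmx1 !mulmx0 !addr0.
rewrite scale_col_mx scaler0 scalemx1 => /eq_col_mx [ulM dlM].
have urM : ursubmx M = 0 by rewrite -symM -trmx_dlsub dlM trmx0.
by rewrite -[LHS]submxK ulM urM dlM.
Qed.

Lemma row_seq_cons (R : nmodType) m (x : R) (s : seq R) :
  \row_(j < 1 + m) (x :: s)`_j = row_mx x%:M (\row_(j < m) s`_j).
Proof.
apply/rowP => j; case: (split_ordP j) => [j0 ->|j1 ->].
  by rewrite row_mxEl !mxE ord1 eqxx mulr1n.
by rewrite row_mxEr !mxE.
Qed.

Lemma size_spectrum (R : comNzRingType) n (A : 'M[R]_n) (s : seq R) :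
  char_poly A = \prod_(x <- s) ('X - x%:P) -> size s = n.
Proof.
move=> /(congr1 (fun p : {poly R} => size p)).
by rewrite /= size_char_poly size_prod_XsubC => -[].
Qed.

Section SymmetricSpectral.
Variable R : rcfType.

Lemma symmetric_unit_eigenvector m (A : 'M[R]_m) x :
  A^T = A -> root (char_poly A) x ->
  exists2 w : 'cV[R]_m, w^T *m w = 1%:M & A *m w = x *: w.
Proof.
move=> symA; rewrite -eigenvalue_root_char => /eigenvalueP [v vA v_neq0].
set y := v^T; set q := (y^T *m y) 0 0.
have Ay : A *m y = x *: y by rewrite /y -symA -trmx_mul vA linearZ.
have q_gt0 : 0 < q.
  by rewrite lt_def tr_mulmx_self_ge0 andbT tr_mulmx_self_eq0 trmx_eq0.
exists ((Num.sqrt q)^-1 *: y).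
  rewrite -scalemxAr [(_ *: y)^T]linearZ /= -scalemxAl scalerA -expr2 exprVn.
  by rewrite sqr_sqrtr ?ltW // [y^T *m y]mx11_scalar -/q scale_scalar_mx mulVf ?gt_eqF.
by rewrite -scalemxAr Ay !scalerA mulrC.
Qed.

Theorem symmetric_spectral m (A : 'M[R]_m) (s : seq R) :
  A^T = A -> char_poly A = \prod_(x <- s) ('X - x%:P) ->
  exists2 U : 'M[R]_m, U^T *m U = 1%:M & A *m U = U *m diag_mx (\row_j s`_j).
Proof.
elim: m A s => [|m IH] A s symA charA.
  by exists 1%:M; apply/matrixP => [[]].
have [x [s' s_eq]] : exists x s', s = x :: s'.
  have := congr1 (fun p : {poly R} => size p) charA.
  rewrite /= size_char_poly size_prod_XsubC.
  by case: s {charA} => // x s' _; exists x, s'.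
subst s.
have [|w ww Aw] := symmetric_unit_eigenvector symA (x := x).
  by rewrite charA big_cons rootM root_XsubC eqxx.
pose e : 'cV[R]_(1 + m) := col_mx 1%:M 0.
have ee : e^T *m e = 1%:M.
  by rewrite tr_col_mx mul_row_col trmx1 mulmx1 trmx0 mul0mx addr0.
have [H [symH HH He]] := householder ee ww.
pose A' := H *m A *m H.
have symA' : A'^T = A' by rewrite /A' !trmx_mul symH symA mulmxA.
have A'e : A' *m e = x *: e.
  by rewrite /A' -mulmxA He -mulmxA Aw -scalemxAr -He mulmxA HH mul1mx.
have A'E := block_mx_of_eigen_e0 symA' A'e.
set A1 := drsubmx A' in A'E.
have symA1 : A1^T = A1 by rewrite /A1 trmx_drsub symA'.
have charA1 : char_poly A1 = \prod_(y <- s') ('X - y%:P).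
  have : char_poly A' = ('X - x%:P) * \prod_(y <- s') ('X - y%:P).
    by rewrite char_poly_conj // charA big_cons.
  rewrite A'E /char_poly char_block_diag_mx det_ublock det_mx11 !mxE eqxx mulr1n.
  by apply: mulfI; rewrite polyXsubC_eq0.
have AH : A *m H = H *m A' by rewrite /A' !mulmxA HH mul1mx.
clearbody A'.
have [U1 U1U1 AU1] := IH A1 s' symA1 charA1.
pose V : 'M[R]_(1 + m) := block_mx 1%:M 0 0 U1.
have UU : (H *m V)^T *m (H *m V) = 1%:M :> 'M_(1 + m).
  rewrite trmx_mul symH mulmxA -(mulmxA V^T) HH mulmx1 tr_block_mx mulmx_block.
  rewrite !trmx0 trmx1 !mul1mx !mulmx0 !mul0mx !addr0 !add0r U1U1.
  by rewrite -scalar_mx_block.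
have AU : A *m (H *m V) = H *m V *m diag_mx (\row_j (x :: s')`_j) :> 'M_(1 + m).
  rewrite mulmxA AH -!mulmxA; congr (H *m _).
  rewrite A'E row_seq_cons diag_mx_row /V !mulmx_block AU1.
  rewrite !mulmx0 !mul0mx !mulmx1 !mul1mx !addr0 !add0r.
  by congr block_mx; apply/matrixP => i j; rewrite !ord1 !mxE.
by exists (H *m V).
Qed.

End SymmetricSpectral.

Lemma gershgorin (R : realDomainType) k (M : 'M[R]_k) (y : 'cV[R]_k) (lam : R) :
  y != 0 -> M *m y = lam *: y ->
  exists i, `|lam - M i i| <= \sum_(l | l != i) `|M i l|.
Proof.
move=> /cV0Pn [i0 yi0] My.
have [i _ ymax] := @arg_maxP _ _ _ i0 xpredT (fun i => `|y i 0|) isT.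
exists i.
have yi_gt0 : 0 < `|y i 0| by apply: lt_le_trans (ymax i0 isT); rewrite normr_gt0.
have row_i : (lam - M i i) * y i 0 = \sum_(l | l != i) M i l * y l 0.
  have := congr1 (fun v : 'cV_k => v i 0) My; rewrite !mxE (bigD1 i) //= => My_i.
  by rewrite mulrBl -My_i addrAC subrr add0r.
rewrite -(ler_pM2r yi_gt0) -normrM row_i mulr_suml.
apply: le_trans (ler_norm_sum _ _ _) _; apply: ler_sum => l _.
by rewrite normrM ler_wpM2l ?normr_ge0 //; exact: ymax.
Qed.

Section BlockModel.
Variables (R : realType) (n k : nat) (lab : 'I_n -> 'I_k) (B : 'M[R]_k).
Local Notation P := (partmx R lab).

Definition block_size i : R := #|block lab i|%:R.
Definition block_degree i : R := \sum_l B i l * block_size l.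
Definition quotient_laplacian : 'M[R]_k :=
  diag_mx (\row_i block_degree i) - diag_mx (\row_i block_size i) *m B.

Lemma quotient_laplacianE i l :
  quotient_laplacian i l = block_degree i *+ (i == l) - block_size i * B i l.
Proof. by rewrite /quotient_laplacian mul_diag_mx !mxE. Qed.

Lemma quotient_laplacian_diag i :
  quotient_laplacian i i = \sum_(l | l != i) B i l * block_size l.
Proof.
rewrite quotient_laplacianE eqxx mulr1n /block_degree (bigD1 i) //=.
by rewrite mulrC addrAC subrr add0r.
Qed.

Lemma partmx_mulE p (M : 'M[R]_(k, p)) j c : (P *m M) j c = M (lab j) c.
Proof.
rewrite mxE (bigD1 (lab j)) //= mxE eqxx mul1r big1 ?addr0 // => i ne.
by rewrite mxE eq_sym (negbTE ne) mul0r.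
Qed.

Lemma mulmx_tr_partmxE p (M : 'M[R]_(p, k)) c j : (M *m P^T) c j = M c (lab j).
Proof. by rewrite -[M *m _]trmxK trmx_mul trmxK mxE partmx_mulE mxE. Qed.

Lemma tr_partmx_mulE p (M : 'M[R]_(n, p)) i c :
  (P^T *m M) i c = \sum_(j | lab j == i) M j c.
Proof.
rewrite mxE [RHS]big_mkcond; apply: eq_bigr => j _; rewrite !mxE.
by case: eqP; rewrite ?mul1r ?mul0r.
Qed.

Lemma sum_lab (F : 'I_k -> R) : \sum_j F (lab j) = \sum_i block_size i * F i.
Proof.
rewrite (partition_big lab xpredT) //=; apply: eq_bigr => i _.
rewrite (eq_bigr (fun=> F i)); last by move=> j /eqP ->.
rewrite (eq_bigl (fun j => j \in block lab i)) => [|j]; last by rewrite inE.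
by rewrite sumr_const mulr_natl.
Qed.

Lemma tr_partmx_partmx : P^T *m P = diag_mx (\row_i block_size i).
Proof.
apply/matrixP => i i'; rewrite tr_partmx_mulE !mxE.
rewrite (eq_bigr (fun=> (i == i')%:R)); last by move=> j /eqP <-; rewrite mxE.
rewrite (eq_bigl (fun j => j \in block lab i)) => [|j]; last by rewrite inE.
by rewrite sumr_const /block_size; case: eqP; rewrite ?mulr0n ?mul0rn.
Qed.

Lemma laplacian_blockE :
  laplacian (P *m B *m P^T) = diag_mx (\row_j block_degree (lab j)) - P *m B *m P^T.
Proof.
congr (diag_mx _ - _); apply/rowP => j; rewrite !mxE.
under eq_bigr do rewrite mulmx_tr_partmxE partmx_mulE.
by rewrite sum_lab; apply: eq_bigr => i _; rewrite mulrC.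
Qed.

Lemma tr_partmx_laplacian :
  P^T *m laplacian (P *m B *m P^T) = quotient_laplacian *m P^T.
Proof.
rewrite laplacian_blockE mulmxBr mulmxBl !mulmxA tr_partmx_partmx; congr (_ - _).
apply/matrixP => i j; rewrite mul_mx_diag mul_diag_mx !mxE.
by case: (eqVneq (lab j) i) => [->|_]; rewrite ?mulr1 ?mul1r ?mulr0 ?mul0r.
Qed.

Section Eigenvector.
Variables (x : 'cV[R]_n) (lam : R).
Hypothesis Lx : laplacian (P *m B *m P^T) *m x = lam *: x.

Lemma laplacian_eigen_entry j :
  (block_degree (lab j) - lam) * x j 0 = (B *m (P^T *m x)) (lab j) 0.
Proof.
have Px : P *m (B *m (P^T *m x)) = diag_mx (\row_j block_degree (lab j)) *m x - lam *: x.
  by rewrite -Lx laplacian_blockE mulmxBl -!mulmxA opprB addrC subrK.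
have := congr1 (fun v : 'cV_n => v j 0) Px; rewrite partmx_mulE mul_diag_mx !mxE => ->.
by rewrite mulrBl.
Qed.

Lemma laplacian_eigen_block_const :
  (forall i, lam < block_degree i) -> forall j l, lab j = lab l -> x j 0 = x l 0.
Proof.
move=> lam_lt j l jl; have := laplacian_eigen_entry j.
rewrite jl -laplacian_eigen_entry; apply: mulfI.
by rewrite subr_eq0 gt_eqF.
Qed.

Lemma laplacian_eigen_quotient :
  quotient_laplacian *m (P^T *m x) = lam *: (P^T *m x).
Proof. by rewrite mulmxA -tr_partmx_laplacian -mulmxA Lx scalemxAr. Qed.

Lemma laplacian_eigen_block_sums_eq0 : (forall i l, 0 <= B i l) ->
  (forall i, \sum_(l | l != i) (B i l * block_size l + block_size i * B i l) < lam) ->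
  P^T *m x = 0.
Proof.
move=> B_ge0 lam_gt; apply/eqP/contraT => /gershgorin /(_ laplacian_eigen_quotient) [i].
rewrite quotient_laplacian_diag.
rewrite [X in _ <= X](eq_bigr (fun l => block_size i * B i l)); last first.
  move=> l li; rewrite quotient_laplacianE eq_sym (negbTE li) mulr0n sub0r normrN.
  by rewrite ger0_norm // mulr_ge0 ?ler0n.
have := lam_gt i; rewrite big_split /= => lam_lt dist.
by have := ler_norm (lam - \sum_(l | l != i) B i l * block_size l); lra.
Qed.

End Eigenvector.
End BlockModel.

Arguments block_size {R n k} lab i.
Arguments block_degree {R n k} lab B i.

Section PartitionRank.
Variables (R : realType) (n k : nat) (lab : 'I_n -> 'I_k) (rep : 'I_k -> 'I_n).
Hypothesis repK : cancel rep lab.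
Local Notation P := (partmx R lab).

Lemma rank_partmx : \rank P = k.
Proof.
have rowsub_rep : rowsub rep P = 1%:M.
  by apply/matrixP => i i'; rewrite !mxE repK.
apply/eqP; rewrite eqn_leq rank_leq_col /= -{1}(mxrank1 R k) -rowsub_rep.
exact/mxrankS/rowsub_sub.
Qed.

Lemma block_constant_partmx p (Y : 'M[R]_(n, p)) :
  (forall j l, lab j = lab l -> forall c, Y j c = Y l c) -> Y = P *m rowsub rep Y.
Proof.
by move=> Yconst; apply/matrixP => j c; rewrite partmx_mulE mxE (Yconst _ _ (repK _)).
Qed.

Lemma orthonormal_partmx_mul_le p (Y : 'M[R]_(n, p)) (S : 'M[R]_(k, p)) :
  Y^T *m Y = 1%:M -> Y = P *m S -> (p <= k)%N.
Proof.
move=> YY YPS; rewrite -(orthonormal_rank YY) YPS.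
exact: leq_trans (mxrankM_maxr _ _) (rank_leq_row _).
Qed.

Lemma orthonormal_tr_partmx_eq0_le p (Y : 'M[R]_(n, p)) :
  Y^T *m Y = 1%:M -> P^T *m Y = 0 -> (p + k <= n)%N.
Proof.
move=> YY PY; have := mxrank_mul_min P^T Y.
by rewrite PY mxrank0 mxrank_tr rank_partmx (orthonormal_rank YY); lia.
Qed.

End PartitionRank.

Section LaplacianSpectrum.
Variables (R : realType) (n k : nat) (lab : 'I_n -> 'I_k) (rep : 'I_k -> 'I_n).
Variables (B : 'M[R]_k) (t : R).
Hypotheses (repK : cancel rep lab) (kn : (k < n)%N).
Hypotheses (B_ge0 : forall i l, 0 <= B i l) (B_sym : B^T = B).
Hypothesis degree_gt : forall i, t < block_degree lab B i.
Hypothesis gershgorin_le : forall i,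
  \sum_(l | l != i) (B i l * block_size lab l + block_size lab i * B i l) <= t.
Local Notation P := (partmx R lab).
Local Notation L := (laplacian (P *m B *m P^T)).

Section Eigenbasis.
Variables (s : seq R) (U : 'M[R]_n).
Hypotheses (s_sorted : sorted <=%R s) (size_s : size s = n) (UU : U^T *m U = 1%:M).
Hypothesis LU : L *m U = U *m diag_mx (\row_j s`_j).

Lemma laplacian_col_eigen j : L *m col j U = s`_j *: col j U.
Proof.
have := congr1 (col j) LU; rewrite col_mul_diag_mx mxE => <-.
by rewrite !colE mulmxA.
Qed.

Lemma spectrum_le i j : (i <= j)%N -> (j < n)%N -> s`_i <= s`_j.
Proof.
move=> ij jn; apply: (sorted_leq_nth le_trans lexx 0 s_sorted) => //;
  rewrite inE size_s //; exact: leq_ltn_trans ij jn.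
Qed.

Lemma low_eigenvector_block_const (j : 'I_n) a b :
  s`_j <= t -> lab a = lab b -> U a j = U b j.
Proof.
move=> sj ab; have lt_degree i : s`_j < block_degree lab B i.
  exact: le_lt_trans (degree_gt i).
by have := laplacian_eigen_block_const (laplacian_col_eigen j) lt_degree ab; rewrite !mxE.
Qed.

Lemma high_eigenvector_block_sums_eq0 (j : 'I_n) :
  t < s`_j -> P^T *m col j U = 0.
Proof.
move=> sj; apply: laplacian_eigen_block_sums_eq0 (laplacian_col_eigen j) B_ge0 _.
by move=> i; apply: le_lt_trans (gershgorin_le i) sj.
Qed.

Lemma threshold_lt_spectrum : t < s`_k.
Proof.
rewrite ltNge; apply/negP => sk_le.
have Y_block_const : forall a b, lab a = lab b -> forall c,
    colsub (widen_ord kn) U a c = colsub (widen_ord kn) U b c.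
  move=> a b ab c; rewrite !mxE; apply: low_eigenvector_block_const ab.
  by apply: le_trans (spectrum_le _ kn) sk_le; rewrite -ltnS; exact: ltn_ord c.
have := orthonormal_partmx_mul_le (colsub_orthonormal (@widen_ord_inj _ _ kn) UU)
  (block_constant_partmx repK Y_block_const).
by rewrite ltnn.
Qed.

Lemma spectrum_pred_le_threshold : s`_k.-1 <= t.
Proof.
rewrite leNgt; apply/negP => sk_gt.
have shift_lt (c : 'I_(n - k.-1)) : (k.-1 + c < n)%N by have := ltn_ord c; lia.
pose f c := Ordinal (shift_lt c).
have f_inj : injective f by move=> c c' e; apply: val_inj; exact: addnI (congr1 val e).
have PY : P^T *m colsub f U = 0.
  apply/matrixP => i c; rewrite mulmx_colsub mxE [RHS]mxE.
  have sfc : t < s`_(f c).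
    exact: lt_le_trans sk_gt (spectrum_le (leq_addr c k.-1) (ltn_ord (f c))).
  have -> : (P^T *m U) i (f c) = (P^T *m col (f c) U) i 0.
    by rewrite !mxE; apply: eq_bigr => l _; rewrite !mxE.
  by rewrite high_eigenvector_block_sums_eq0 // mxE.
have := orthonormal_tr_partmx_eq0_le repK (colsub_orthonormal f_inj UU) PY.
have := ltn_ord (lab (Ordinal (leq_ltn_trans (leq0n k) kn))); lia.
Qed.

Lemma spectrum_block_degree : exists i, s`_k = block_degree lab B i.
Proof.
pose j : 'I_n := Ordinal kn.
have [a xa] := cV0Pn _ (orthonormal_col_neq0 j UU).
exists (lab a); have := laplacian_eigen_entry (laplacian_col_eigen j) a.
rewrite high_eigenvector_block_sums_eq0 ?threshold_lt_spectrum // mulmx0 !mxE.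
rewrite mxE in xa; move/eqP; rewrite mulf_eq0 (negbTE xa) orbF subr_eq0.
by move/eqP.
Qed.

Lemma low_eigenvectors_partmx :
  exists2 S : 'M[R]_k, S \in unitmx & colsub (widen_ord (ltnW kn)) U = P *m S.
Proof.
set V := colsub _ U.
have VV : V^T *m V = 1%:M := colsub_orthonormal (@widen_ord_inj _ _ (ltnW kn)) UU.
have VPS : V = P *m rowsub rep V.
  apply: block_constant_partmx => // a b ab c; rewrite !mxE.
  apply: low_eigenvector_block_const ab; apply: le_trans spectrum_pred_le_threshold.
  have c_le : (c <= k.-1)%N by have := ltn_ord c; lia.
  exact: spectrum_le c_le (leq_ltn_trans (leq_pred k) kn).
exists (rowsub rep V) => //.
have : V^T *m P *m rowsub rep V = 1%:M by rewrite -mulmxA -VPS.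
by case/mulmx1_unit.
Qed.

End Eigenbasis.

Lemma block_laplacian_sym : L^T = L.
Proof.
by rewrite /laplacian (linearB trmx) /= tr_diag_mx !trmx_mul trmxK B_sym mulmxA.
Qed.

Lemma block_laplacian_k_block_ideal : k_block_ideal L lab.
Proof.
move=> s [s_sorted charL]; have size_s := size_spectrum charL.
have [U UU LU] := symmetric_spectral block_laplacian_sym charL.
have [S S_unit VPS] := low_eigenvectors_partmx s_sorted size_s UU LU.
exists (colsub (widen_ord (ltnW kn)) U); split.
- exact: colsub_orthonormal (@widen_ord_inj _ _ _) UU.
- by move=> j; rewrite col_colsub (laplacian_col_eigen LU).
- by exists S.
Qed.

Lemma block_laplacian_spectrum s : sorted_spectrum L s ->
  s`_k.-1 <= t /\ exists i, s`_k = block_degree lab B i.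
Proof.
move=> [s_sorted charL]; have size_s := size_spectrum charL.
have [U UU LU] := symmetric_spectral block_laplacian_sym charL.
split; first exact: spectrum_pred_le_threshold s_sorted size_s UU LU.
exact: spectrum_block_degree s_sorted size_s UU LU.
Qed.

End LaplacianSpectrum.

Section OrdMinMax.
Variable R : realType.

Lemma foldr_min_le (x0 : R) s x : x \in s -> foldr Num.min x0 s <= x.
Proof.
elim: s => //= a s IH; rewrite inE => /orP [/eqP ->|xs]; first by rewrite ge_min lexx.
by rewrite ge_min IH ?orbT.
Qed.

Lemma foldr_max_ge (x0 : R) s x : x \in s -> x <= foldr Num.max x0 s.
Proof.
elim: s => //= a s IH; rewrite inE => /orP [/eqP ->|xs]; first by rewrite le_max lexx.
by rewrite le_max IH ?orbT.
Qed.

Lemma foldr_min_mem (x0 : R) s : foldr Num.min x0 s \in x0 :: s.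
Proof.
elim: s => [|a s IH] /=; first exact: mem_head.
rewrite !inE; case: (leP a (foldr Num.min x0 s)) => _; first by rewrite eqxx orbT.
by move: IH; rewrite inE => /orP [->|->]; rewrite ?orbT.
Qed.

Lemma ordmin_le k (f : 'I_k -> R) i : ordmin f <= f i.
Proof. by apply: foldr_min_le; apply: map_f; rewrite mem_enum. Qed.

Lemma ordmax_ge k (f : 'I_k -> R) i : f i <= ordmax f.
Proof. by apply: foldr_max_ge; apply: map_f; rewrite mem_enum. Qed.

Lemma ordmin_mem k (f : 'I_k -> R) : (0 < k)%N -> exists i, ordmin f = f i.
Proof.
case: k f => // k f _; rewrite /ordmin /seqmin.
set s := [seq f i | i <- enum 'I_k.+1].
have s_head : head 0 s \in s by rewrite /s enum_ordSl /= mem_head.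
have : foldr Num.min (head 0 s) s \in s.
  by have := foldr_min_mem (head 0 s) s; rewrite inE => /orP [/eqP ->|].
by case/mapP => i _ ->; exists i.
Qed.

End OrdMinMax.

Section BlockModelBounds.
Variables (R : realType) (n k : nat) (lab : 'I_n -> 'I_k) (B : 'M[R]_k) (rho : R).
Hypothesis B_ge0 : forall i l, 0 <= B i l.
Local Notation sz := (@block_size R n k lab).
Local Notation nmin := (ordmin sz).
Hypothesis nmin_gt0 : 0 < nmin.

Lemma block_degree_ge_diag i : ordmin (fun i => B i i) * nmin <= block_degree lab B i.
Proof.
apply: le_trans (ler_wpM2r (ltW nmin_gt0) (ordmin_le _ i)) _.
apply: (@le_trans _ _ (B i i * sz i)); first by rewrite ler_wpM2l ?ordmin_le.
rewrite /block_degree (bigD1 i) //= lerDl.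
by apply: sumr_ge0 => l _; rewrite mulr_ge0 ?ler0n.
Qed.

Lemma block_degree_ge_rowsum i :
  ordmin (fun i => \sum_j B i j) * nmin <= block_degree lab B i.
Proof.
apply: le_trans (ler_wpM2r (ltW nmin_gt0) (ordmin_le _ i)) _.
rewrite mulr_suml; apply: ler_sum => l _.
by rewrite ler_wpM2l ?ordmin_le.
Qed.

Hypotheses (rho_ge0 : 0 <= rho) (size_ratio : ordmax sz / nmin <= rho).

Lemma gershgorin_sum_le i :
  \sum_(l | l != i) (B i l * block_size lab l + block_size lab i * B i l)
    <= 2 * rho * ordmax (fun i => \sum_(j < k | j != i) B i j) * nmin.
Proof.
have size_le l : block_size lab l <= rho * nmin.
  by apply: le_trans (ordmax_ge _ l) _; rewrite -ler_pdivrMr.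
apply: (@le_trans _ _ (2 * rho * nmin * \sum_(l | l != i) B i l)).
  rewrite mulr_sumr; apply: ler_sum => l _.
  have := size_le l; have := size_le i; have := B_ge0 i l; nra.
rewrite mulrAC; apply: ler_wpM2r; first exact: ltW.
apply: ler_wpM2l; first by rewrite mulr_ge0.
exact: ordmax_ge (fun i => \sum_(j < k | j != i) B i j) i.
Qed.

End BlockModelBounds.

Theorem lemma9 (R : realType) (n k : nat) (lab : 'I_n -> 'I_k)
  (Q W : 'M[R]_k) (rho Delta : R) :
  (k < n)%N ->
  (forall i : 'I_k, exists j : 'I_n, lab j = i) ->
  Q^T = Q -> W^T = W ->
  (forall i j, 0 <= Q i j <= 1) -> (forall i j, 0 <= W i j) ->
  let B := map2_mx (fun q w => q * w) Q W in
  let sz := fun i : 'I_k => (#|block lab i|)%:R : R in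
  1 <= rho -> 0 < Delta ->
  ordmax sz / ordmin sz <= rho ->
  ordmin (fun i => B i i)
    - 2 * rho * ordmax (fun i => \sum_(j < k | j != i) B i j) >= Delta ->
  let P := partmx R lab in
  let Ablk := P *m B *m P^T in
  let Lblk := laplacian Ablk in
  let nmin := ordmin sz in
  let bmin := ordmin (fun i => \sum_j B i j) in
  k_block_ideal Lblk lab /\
  (forall s, sorted_spectrum Lblk s ->
     s`_k >= bmin * nmin /\ s`_k - s`_k.-1 >= Delta * nmin).
Proof.
move=> kn surj QT WT Q01 W0 B sz rho1 D0 size_ratio gap P Ablk Lblk nmin bmin.
have [rep repK] : exists rep : 'I_k -> 'I_n, cancel rep lab.
  have surjb i : exists j, lab j == i by have [j <-] := surj i; exists j.
  by exists (fun i => xchoose (surjb i)) => i; apply/eqP/(xchooseP (surjb i)).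
have B_ge0 i j : 0 <= B i j.
  by rewrite /B mxE mulr_ge0 ?W0 //; case/andP: (Q01 i j).
have B_sym : B^T = B by apply/matrixP => i j; rewrite /B !mxE -{1}QT -{1}WT !mxE.
have nmin_gt0 : 0 < nmin.
  have k_gt0 : (0 < k)%N := leq_ltn_trans (leq0n _) (ltn_ord (lab (Ordinal kn))).
  have [i nmin_i] := ordmin_mem sz k_gt0.
  by rewrite /nmin nmin_i ltr0n card_gt0; apply/set0Pn; exists (rep i); rewrite inE repK.
pose t := 2 * rho * ordmax (fun i => \sum_(j < k | j != i) B i j) * nmin.
have degree_ge i : t + Delta * nmin <= block_degree lab B i.
  have := block_degree_ge_diag B_ge0 nmin_gt0 i; have := ler_wpM2r (ltW nmin_gt0) gap.
  rewrite /t /nmin; lra.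
have degree_gt i : t < block_degree lab B i.
  by apply: lt_le_trans (degree_ge i); rewrite ltrDl mulr_gt0.
have gershgorin_le := gershgorin_sum_le B_ge0 nmin_gt0 (le_trans ler01 rho1) size_ratio.
split; first exact: (block_laplacian_k_block_ideal repK kn B_ge0 B_sym degree_gt
                                                     gershgorin_le).
move=> s /(block_laplacian_spectrum repK kn B_ge0 B_sym degree_gt gershgorin_le).
move=> [sk1 [i ->]].
by split; [exact: block_degree_ge_rowsum | have := degree_ge i; lra].
Qed.
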